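(* Let $\rho$ be a quantum state on the $L$-qubit Hilbert space $\mathcal{H}_L$ and let $\Psi,\Phi$ be two pure states on $\mathcal{H}_L\otimes\mathcal{H}_M$ ($\mathcal{H}_M$ an $M$-qubit space), both purifications of $\rho$ (i.e. $\operatorname{Tr}_{\mathcal{H}_M}\Psi=\operatorname{Tr}_{\mathcal{H}_M}\Phi=\rho$) and both of definite parity. Then there exists a unitary channel $\mathcal{U}$ on $\mathcal{H}_M$ that maps states of definite parity into states of definite parity and satisfies $(\mathcal{I}\otimes\mathcal{U})(\Psi)=\Phi$.
   Context: For $n$ qubits, the computational basis vectors $|s_1,\dots,s_n\rangle$, $s_i\in\{0,1\}$, have parity $p=\bigoplus_i s_i$; $\mathcal{H}_n=\mathcal{H}_n^0\oplus\mathcal{H}_n^1$ where $\mathcal{H}_n^p$ is spanned by basis vectors of parity $p$ (for $\mathcal{H}_L\otimes\mathcal{H}_M$, parity is computed over all $L+M$ qubits). A state $\rho$ has definite parity if $\rho=\rho_0+\rho_1$ with $\rho_p$ supported on $\mathcal{H}_n^p$; in particular a pure state has definite parity $p$ if its vector lies in $\mathcal{H}_n^p$. *)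

From HB Require Import structures.
From mathcomp Require Import all_boot all_order all_algebra.
From mathcomp Require Export spectral.
Set Implicit Arguments. Unset Strict Implicit. Unset Printing Implicit Defensive.
Import Order.TTheory GRing.Theory Num.Theory.
Local Open Scope ring_scope.
Local Open Scope sesquilinear_scope.

Section QDefs.
Variable C : numClosedFieldType.

(* Parity of the computational basis vector |s_1,...,s_n> with index i : 'I_(2^n),
   the bits s_b being the binary digits of i. *)
Definition qparity (n : nat) (i : 'I_(2 ^ n)) : bool :=
  odd (\sum_(b < n) (odd (i %/ 2 ^ b) : nat)).

(* Basis of H_L (x) H_M: index k : 'I_(2^L * 2^M) corresponds (via mathcomp's
   mxvec_index bijection) to a pair (i, j) of basis indices of H_L and H_M. *)
Definition unpair (m n : nat) (k : 'I_(m * n)) : 'I_m * 'I_n :=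
  enum_val (cast_ord (esym (mxvec_cast m n)) k).

Definition cparity (L M : nat) (k : 'I_(2 ^ L * 2 ^ M)) : bool :=
  qparity (unpair k).1 (+) qparity (unpair k).2.

Definition kron (m n : nat) (A : 'M[C]_m) (B : 'M[C]_n) : 'M[C]_(m * n) :=
  \matrix_(k, l) (A (unpair k).1 (unpair l).1 * B (unpair k).2 (unpair l).2).

Definition ptrace2 (m n : nat) (X : 'M[C]_(m * n)) : 'M[C]_m :=
  \matrix_(i, i') \sum_(j < n) X (mxvec_index i j) (mxvec_index i' j).

Definition psdmx (N : nat) (A : 'M[C]_N) : Prop :=
  forall v : 'rV[C]_N, 0 <= (v *m A *m v ^t*) 0 0.

Definition is_state (N : nat) (rho : 'M[C]_N) : Prop :=
  psdmx rho /\ \tr rho = 1.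

Definition is_pure_state (N : nat) (X : 'M[C]_N) : Prop :=
  exists psi : 'cV[C]_N, psi ^t* *m psi = 1%:M /\ X = psi *m psi ^t*.

Definition definite_parity (N : nat) (par : 'I_N -> bool) (rho : 'M[C]_N) : Prop :=
  exists rho0 rho1 : 'M[C]_N, rho = rho0 + rho1 /\
    forall (p : bool) (i j : 'I_N),
      (if p then rho1 else rho0) i j != 0 -> par i = p /\ par j = p.

Definition uchan (N : nat) (U : 'M[C]_N) (X : 'M[C]_N) : 'M[C]_N :=
  U *m X *m U ^t*.

End QDefs.

(* Reshape the purifications psi, phi into 2^L x 2^M coefficient matrices A, B.
   Equal partial traces say A A^* = B B^*, and any two matrices with the same
   Gram matrix differ by a unitary on the right: A W = B.  Definite parity of
   psi means A i j <> 0 only when parity i (+) parity j is a fixed p, so the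
   Gram matrices of the even and of the odd columns of A are determined by
   A A^* and p.  When phi has the same total parity, unitaries for the two
   column blocks glue into a parity-preserving W; otherwise first flip the
   lowest bit of the column index of B.  U = W^T is then homogeneous for the
   parity grading, hence preserves definite parity. *)
From mathcomp Require Import all_boot all_order all_algebra.
From mathcomp Require Import fingroup perm spectral zify.
Set Implicit Arguments. Unset Strict Implicit. Unset Printing Implicit Defensive.
Import Order.TTheory GRing.Theory Num.Theory.
Local Open Scope ring_scope.
Local Open Scope sesquilinear_scope.

Section UnitaryFreedom.
Variable C : numClosedFieldType.

Lemma trmxC_mul m n p (A : 'M[C]_(m, n)) (B : 'M[C]_(n, p)) :
  (A *m B)^t* = B^t* *m A^t*.
Proof. by rewrite trmx_mul map_mxM. Qed.

Lemma unitarymx1 n : (1%:M : 'M[C]_n) \is unitarymx.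
Proof. by apply/unitarymxP; rewrite trmx1 map_mx1 mulmx1. Qed.

Lemma perm_mx_unitary n (s : 'S_n) : perm_mx s \is @unitarymx C n n.
Proof.
by apply/unitarymxP; rewrite tr_perm_mx map_perm_mx -perm_mxM mulgV perm_mx1.
Qed.

Lemma gram_mulmx_unitary m1 m2 n (A : 'M[C]_(m1, n)) (B : 'M[C]_(m2, n))
    (U : 'M[C]_n) :
  U \is unitarymx -> (A *m U) *m (B *m U)^t* = A *m B^t*.
Proof. by move=> Uu; rewrite trmxC_mul !mulmxA mulmxtVK. Qed.

Lemma mul_col_mx_trmxC m1 m2 m3 m4 n (A : 'M[C]_(m1, n)) (B : 'M[C]_(m2, n))
    (D : 'M[C]_(m3, n)) (E : 'M[C]_(m4, n)) :
  col_mx A B *m (col_mx D E)^t* =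
  block_mx (A *m D^t*) (A *m E^t*) (B *m D^t*) (B *m E^t*).
Proof. by rewrite tr_col_mx map_row_mx mul_col_row. Qed.

Lemma mul_row_mx_trmxC m p n1 n2 (A : 'M[C]_(m, n1)) (B : 'M[C]_(m, n2))
    (D : 'M[C]_(p, n1)) (E : 'M[C]_(p, n2)) :
  row_mx A B *m (row_mx D E)^t* = A *m D^t* + B *m E^t*.
Proof. by rewrite tr_row_mx map_col_mx mul_row_col. Qed.

Lemma unitarymx_block1 n (V : 'M[C]_n) :
  V \is unitarymx -> block_mx (1%:M : 'M_1) 0 0 V \is unitarymx.
Proof.
move=> Vu; apply/unitarymxP; rewrite tr_block_mx map_block_mx mulmx_block.
rewrite !trmx0 !map_mx0 trmx1 map_mx1 !mulmx0 !mul0mx mulmx1 !addr0 !add0r.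
by rewrite (unitarymxP Vu) -scalar_mx_block.
Qed.

Lemma row0_scalar_mx1 n : row 0 (1%:M : 'M[C]_(1 + n)) = row_mx 1%:M 0.
Proof.
apply/rowP => j; rewrite !mxE; case: splitP => [j' Hj|k Hk].
  by rewrite mxE -val_eqE /= Hj (ord1 j').
by rewrite -val_eqE /= Hk mxE.
Qed.

(* Gram-Schmidt on [col_mx x 0] gives a unitary whose first row is [x]/|x|. *)
Lemma unitary_align_row n (x : 'rV[C]_(1 + n)) :
  exists H : 'M[C]_(1 + n), exists2 a : C,
    H \is unitarymx & 0 <= a /\ x *m H^t* = row_mx a%:M 0.
Proof.
pose A : 'M[C]_(1 + n) := col_mx x 0; pose H := schmidt A.
have Hu : H \is unitarymx by apply: schmidt_unitarymx.
have rowA0 : row 0 A = x.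
  by apply/rowP => j; rewrite !mxE; case: splitP => [i _|//]; rewrite ord1.
have [D xE] : exists D : 'M_1, x = D *m row 0 H.
  have := row_schmidt_sub A 0; rewrite (bigD1 0) //= big1 ?addsmx0; last first.
    by move=> k /andP[]; rewrite leqn0 => /eqP k0; rewrite -val_eqE /= k0.
  by rewrite genmxE rowA0 => /submxP.
rewrite [D]mx11_scalar mul_scalar_mx in xE.
have row0H_norm : (row 0 H *m (row 0 H)^t*) 0 0 = 1.
  transitivity ((H *m H^t*) 0 0); last by rewrite (unitarymxP Hu) mxE.
  by rewrite !mxE; apply: eq_bigr => k _; rewrite !mxE.
exists H, (D 0 0) => //; split.
  have := form1_row_schmidt A 0.
  by rewrite dotmxE rowA0 xE -scalemxAl mxE row0H_norm mulr1.
rewrite xE -scalemxAl -row_mul (unitarymxP Hu) row0_scalar_mx1.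
by rewrite scale_row_mx scaler0 scale_scalar_mx mulr1.
Qed.

Lemma mul_row_mx_scalar0_trmxC r n (a : C) (c : 'cV[C]_r) (D : 'M[C]_(r, n)) :
  row_mx c D *m (row_mx a%:M (0 : 'M_(1, n)))^t* = a^* *: c.
Proof.
rewrite mul_row_mx_trmxC !trmx0 !map_mx0 mulmx0 addr0.
by rewrite tr_scalar_mx map_scalar_mx mul_mx_scalar.
Qed.

Lemma gram_eq_first_row r n (a : C) (c c' : 'cV[C]_r) (D D' : 'M[C]_(r, n)) :
  a != 0 ->
  col_mx (row_mx a%:M 0) (row_mx c D) *m
    (col_mx (row_mx a%:M 0) (row_mx c D))^t* =
  col_mx (row_mx a%:M 0) (row_mx c' D') *m
    (col_mx (row_mx a%:M 0) (row_mx c' D'))^t* ->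
  c = c' /\ D *m D^t* = D' *m D'^t*.
Proof.
move=> a_neq0; rewrite !mul_col_mx_trmxC !mul_row_mx_scalar0_trmxC.
case/eq_block_mx => _ _ /(scalerI _) cc' DD'.
have {}cc' : c = c' by apply: cc'; rewrite conjC_eq0.
by move: DD'; rewrite !mul_row_mx_trmxC cc' => /addrI.
Qed.

(* Rotate the first rows of X and Y onto a * e_0 (the same a, as the (0,0) Gram
   entries agree); the remaining rows then have equal Gram matrices. *)
Lemma gram_eq_unitary r n (X Y : 'M[C]_(r, n)) :
  X *m X^t* = Y *m Y^t* -> exists2 W : 'M[C]_n, W \is unitarymx & X *m W = Y.
Proof.
elim: r n X Y => [|r IH] [|n] X Y XY;
  try by exists 1%:M; rewrite ?unitarymx1 // ?flatmx0 ?thinmx0.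
move: X Y XY; rewrite -[n.+1]/(1 + n)%N -[r.+1]/(1 + r)%N => X Y XY.
have [Hx [a Hxu [a_ge0 xH]]] := unitary_align_row (usubmx X).
have [Hy [b Hyu [b_ge0 yH]]] := unitary_align_row (usubmx Y).
pose Z := dsubmx X *m Hx^t*; pose Z' := dsubmx Y *m Hy^t*.
have XH : X *m Hx^t* = col_mx (row_mx a%:M 0) (row_mx (lsubmx Z) (rsubmx Z)).
  by rewrite -[X in LHS]vsubmxK mul_col_mx xH hsubmxK.
have YH : Y *m Hy^t* = col_mx (row_mx b%:M 0) (row_mx (lsubmx Z') (rsubmx Z')).
  by rewrite -[Y in LHS]vsubmxK mul_col_mx yH hsubmxK.
have XYH : (X *m Hx^t*) *m (X *m Hx^t*)^t* = (Y *m Hy^t*) *m (Y *m Hy^t*)^t*.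
  by rewrite !gram_mulmx_unitary ?trmxC_unitary.
have ba : b = a.
  move: XYH; rewrite XH YH !mul_col_mx_trmxC => /eq_block_mx[+ _ _ _].
  rewrite !mul_row_mx_trmxC !mul0mx !addr0 !tr_scalar_mx !map_scalar_mx.
  rewrite -!scalar_mxM => /matrixP/(_ 0 0); rewrite !mxE eqxx !mulr1n.
  rewrite /= !geC0_conj // -!expr2.
  by move/eqP; rewrite eqrXn2 // => /eqP.
rewrite {b b_ge0 yH}ba in YH XYH.
suff [V Vu [aV ZV]] : exists2 V : 'M[C]_(1 + n), V \is unitarymx &
    row_mx a%:M 0 *m V = row_mx a%:M 0 /\ Z *m V = Z'.
  exists (Hx^t* *m V *m Hy); first by rewrite !mul_unitarymx ?trmxC_unitary.
  by rewrite !mulmxA XH -(mulmxKtV Y Hyu) // YH mul_col_mx aV !hsubmxK ZV.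
have [->|a_neq0] := eqVneq a 0.
  have ZZ' : Z *m Z^t* = Z' *m Z'^t*.
    by move: XYH; rewrite XH YH !hsubmxK !mul_col_mx_trmxC => /eq_block_mx[].
  have [V Vu ZV] := IH _ _ _ ZZ'; exists V => //.
  by rewrite (raddf0 (@scalar_mx C 1)) row_mx0 mul0mx.
move: XYH; rewrite XH YH => /(gram_eq_first_row a_neq0) [cc' DD'].
have [V Vu DV] := IH _ _ _ DD'.
exists (block_mx 1%:M 0 0 V); first exact: unitarymx_block1.
rewrite -[Z]hsubmxK -[Z']hsubmxK !mul_row_block !mulmx0 !mul0mx !mulmx1.
by rewrite !addr0 !add0r cc' DV.
Qed.

End UnitaryFreedom.

Section BlockUnitaryFreedom.
Variables (C : numClosedFieldType) (n : nat).
Implicit Types (T : {set 'I_n}).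

Lemma sumr_delta (a : 'I_n) (F : 'I_n -> C) :
  \sum_j (a == j)%:R * F j = F a.
Proof.
rewrite (bigD1 a) //= eqxx mul1r big1 ?addr0 // => j /negbTE.
by rewrite eq_sym => ->; rewrite mul0r.
Qed.

Definition selmx T : 'M[C]_(#|T|, n) := \matrix_(t, j) (enum_val t == j)%:R.

Definition gram_on T r (X : 'M[C]_(r, n)) : 'M[C]_r :=
  \matrix_(i, i') \sum_(j in T) X i j * (X i' j)^*.

Lemma selmx_trmxCE T j t : (selmx T)^t* j t = (enum_val t == j)%:R.
Proof. by rewrite !mxE rmorph_nat. Qed.

Lemma selmx_unitary T : selmx T \is unitarymx.
Proof.
apply/unitarymxP/matrixP => t t'; rewrite !mxE.
under eq_bigr do rewrite selmx_trmxCE mxE.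
by rewrite sumr_delta (inj_eq enum_val_inj) eq_sym.
Qed.

Lemma selmx_orthoC T : selmx T *m (selmx (~: T))^t* = 0.
Proof.
apply/matrixP => t t'; rewrite !mxE.
under eq_bigr do rewrite selmx_trmxCE mxE.
rewrite sumr_delta.
have := enum_valP t; have := enum_valP t'; rewrite inE.
by case: eqP => // ->; move=> /negbTE ->.
Qed.

Lemma selmx_proj T :
  (selmx T)^t* *m selmx T = \matrix_(i, j) ((i == j) && (i \in T))%:R.
Proof.
apply/matrixP => i j; rewrite !mxE.
under eq_bigr do rewrite selmx_trmxCE mxE.
rewrite -(big_enum_val (fun k => (k == i)%:R * (k == j)%:R : C)) /=.
rewrite big_mkcond /= (bigD1 i) //= big1 ?addr0.
  by rewrite eqxx mul1r; case: (i \in T); rewrite ?andbT ?andbF.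
by move=> k /negbTE ->; rewrite mul0r if_same.
Qed.

Lemma selmx_projD T :
  (selmx T)^t* *m selmx T + (selmx (~: T))^t* *m selmx (~: T) = 1%:M.
Proof.
rewrite !selmx_proj; apply/matrixP => i j; rewrite !mxE inE.
by case: (i \in T); case: (i == j); rewrite /= ?addr0 ?add0r.
Qed.

Lemma selmx_conj_support T (M : 'M[C]_#|T|) i j :
  ((selmx T)^t* *m M *m selmx T) i j != 0 -> (i \in T) && (j \in T).
Proof.
apply: contraR => /nandP T_ij; rewrite !mxE; apply/eqP/big1 => k _.
case: T_ij => [iNT|jNT].
  rewrite mxE big1 ?mul0r // => t _; rewrite selmx_trmxCE.
  by have := enum_valP t; case: eqP => [->|_ _]; rewrite ?(negbTE iNT) ?mul0r.
rewrite mxE [selmx T k j]mxE; have := enum_valP k.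
by case: eqP => [->|_ _]; rewrite ?(negbTE jNT) ?mulr0.
Qed.

Lemma gram_on_selmx T r (X : 'M[C]_(r, n)) :
  (X *m (selmx T)^t*) *m (X *m (selmx T)^t*)^t* = gram_on T X.
Proof.
rewrite trmxC_mul trmxCK mulmxA -(mulmxA X) selmx_proj.
apply/matrixP => i i'; rewrite !mxE [RHS]big_mkcond; apply: eq_bigr => k _.
rewrite !mxE (bigD1 k) //= big1 ?addr0; last first.
  by move=> j /negbTE jk; rewrite mxE jk mulr0.
by rewrite mxE eqxx /=; case: (k \in T); rewrite ?mulr1 ?mulr0 ?mul0r.
Qed.

Lemma gram_on_eq_unitary (c : 'I_n -> bool) r (X Y : 'M[C]_(r, n)) :
  (forall b, gram_on [set j | c j == b] X = gram_on [set j | c j == b] Y) ->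
  exists W : 'M[C]_n, [/\ W \is unitarymx, X *m W = Y &
    forall i j, W i j != 0 -> c i = c j].
Proof.
move=> XY; move: (XY true) (XY false); pose T := [set j | c j].
have [-> ->] : [set j | c j == true] = T /\ [set j | c j == false] = ~: T.
  by split; apply/setP => j; rewrite !inE; case: (c j).
rewrite -!gram_on_selmx => /gram_eq_unitary[W0 W0u XW0] /gram_eq_unitary[W1 W1u XW1].
pose S0 := selmx T; pose S1 := selmx (~: T).
have S01 : S0 *m S1^t* = 0 := selmx_orthoC T.
have S10 : S1 *m S0^t* = 0.
  by rewrite -[S1 *m _]trmxCK trmxC_mul trmxCK S01 trmx0 map_mx0.
exists (S0^t* *m W0 *m S0 + S1^t* *m W1 *m S1); split.
- apply/unitarymxP; rewrite raddfD /= raddfD /= !trmxC_mul !trmxCK.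
  rewrite mulmxDl !mulmxDr !mulmxA !mulmxtVK ?selmx_unitary //.
  rewrite -!(mulmxA _ S0) -!(mulmxA _ S1) S01 S10 !mulmx0 !mul0mx addr0 add0r.
  exact: selmx_projD.
- by rewrite mulmxDr !mulmxA XW0 XW1 -!(mulmxA Y) -mulmxDr selmx_projD mulmx1.
move=> i j; rewrite mxE.
have [W0ij|/selmx_conj_support/andP[]] := eqVneq ((S0^t* *m W0 *m S0) i j) 0.
  rewrite W0ij add0r => /selmx_conj_support.
  by rewrite !inE => /andP[/negbTE-> /negbTE->].
by rewrite !inE => -> ->.
Qed.

End BlockUnitaryFreedom.

Lemma qparity0 (j : 'I_(2 ^ 0)) : qparity j = false.
Proof. by rewrite /qparity big_ord0. Qed.

Section FlipLowestBit.
Variable M : nat.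

Fact flip_lsb_subproof (j : 'I_(2 ^ M.+1)) :
  ((if odd j then j.-1 else j.+1) < 2 ^ M.+1)%N.
Proof. by case: j => j /=; rewrite expnS; case: ifP; lia. Qed.

Definition flip_lsb (j : 'I_(2 ^ M.+1)) : 'I_(2 ^ M.+1) :=
  Ordinal (flip_lsb_subproof j).

Lemma flip_lsbK : involutive flip_lsb.
Proof.
move=> j; apply/val_inj => /=; case oj: (odd j) => /=; last by rewrite oj.
by rewrite (_ : odd j.-1 = false); lia.
Qed.

Definition flip_lsb_perm : 'S_(2 ^ M.+1) := perm (inv_inj flip_lsbK).

Lemma qparity_flip_lsb (j : 'I_(2 ^ M.+1)) :
  qparity (flip_lsb_perm j) = ~~ qparity j.
Proof.
rewrite permE /qparity !big_ord_recl !expn0 !divn1 /= !oddD !oddb.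
have -> : odd (if odd j then j.-1 else j.+1) = ~~ odd j by case: ifP; lia.
rewrite addNb; congr (~~ (_ (+) odd _)); apply: eq_bigr => b _.
by rewrite /bump /= add1n (expnS 2 b) !divnMA; congr (odd (_ %/ _)); case: ifP; lia.
Qed.

Lemma qparity_flip_lsbV (j : 'I_(2 ^ M.+1)) :
  qparity ((flip_lsb_perm^-1)%g j) = ~~ qparity j.
Proof. by rewrite -{2}(permKV flip_lsb_perm j) qparity_flip_lsb negbK. Qed.

End FlipLowestBit.

Definition homogeneous_mx (C : numClosedFieldType) N (par : 'I_N -> bool)
    (U : 'M[C]_N) (f : bool) :=
  forall i j, U i j != 0 -> par i = par j (+) f.

Section ParityUnitaryFreedom.
Variables (C : numClosedFieldType) (L M : nat).
Implicit Types (A B : 'M[C]_(2 ^ L, 2 ^ M)) (p : bool).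

(* [A] will be the coefficient matrix of a pure state of definite parity [p]. *)
Definition total_parity A p :=
  forall i j, A i j != 0 -> qparity i (+) qparity j = p.

Lemma gram_on_parity A p b : total_parity A p ->
  gram_on [set j | qparity j == b] A =
  \matrix_(i, i')
    (((qparity i == p (+) b) && (qparity i' == p (+) b))%:R * (A *m A^t*) i i').
Proof.
move=> pA; apply/matrixP => i i'; rewrite !mxE big_mkcond big_distrr /=.
apply: eq_bigr => j _; rewrite !mxE inE.
have [->|Aij] := eqVneq (A i j) 0; first by rewrite !mul0r mulr0 if_same.
have [->|Ai'j] := eqVneq (A i' j) 0; first by rewrite conjC0 !mulr0 if_same.
rewrite -(pA _ _ Aij); move: (pA _ _ Ai'j); rewrite -(pA _ _ Aij).
by case: (qparity i) (qparity i') (qparity j) b => [] [] [] []; rewrite ?mul1r ?mul0r.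
Qed.

Lemma gram_eq_parity_unitary A B p :
  A *m A^t* = B *m B^t* -> total_parity A p -> total_parity B p ->
  exists W : 'M[C]_(2 ^ M),
    [/\ W \is unitarymx, A *m W = B & homogeneous_mx (@qparity M) W false].
Proof.
move=> AB pA pB; have [|W [Wu AW Wpar]] := @gram_on_eq_unitary _ _ (@qparity M) _ A B.
  by move=> b; rewrite (gram_on_parity b pA) (gram_on_parity b pB) AB.
by exists W; split=> // i j /Wpar ->; rewrite addbF.
Qed.

End ParityUnitaryFreedom.

Lemma gram_eq_homogeneous_unitary (C : numClosedFieldType) L M
    (A B : 'M[C]_(2 ^ L, 2 ^ M)) p p' :
  A *m A^t* = B *m B^t* -> total_parity A p -> total_parity B p' ->
  exists W : 'M[C]_(2 ^ M), exists f : bool,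
    [/\ W \is unitarymx, A *m W = B & homogeneous_mx (@qparity M) W f].
Proof.
case: M A B => [|M] A B AB pA pB.
  have [W Wu AW] := gram_eq_unitary AB.
  by exists W, false; split => // i j _; rewrite !qparity0.
have [pp'|/negPf pp'] := eqVneq p p'.
  rewrite -{p'}pp' in pB; have [W [Wu AW Wpar]] := gram_eq_parity_unitary AB pA pB.
  by exists W, false; split => // i j /Wpar ->; rewrite addbF.
(* Flipping the lowest bit of the column index of B fixes its total parity. *)
pose s := flip_lsb_perm M; pose Bs := col_perm s B.
have pBs : total_parity Bs p.
  move=> i j; rewrite mxE => /pB; rewrite qparity_flip_lsb addbN.
  by move/(canRL negbK); case: (p) (p') pp' => [] [].
have ABs : A *m A^t* = Bs *m Bs^t*.
  by rewrite /Bs col_permE gram_mulmx_unitary ?perm_mx_unitary.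
have [W [Wu AW Wpar]] := gram_eq_parity_unitary ABs pA pBs.
exists (col_perm s^-1%g W), true; split.
- by rewrite col_permE invgK mul_unitarymx ?perm_mx_unitary.
- by rewrite col_permE mulmxA AW -col_permE -col_permM mulVg col_perm1.
by move=> i j; rewrite mxE => /Wpar ->; rewrite qparity_flip_lsbV addbF addbT.
Qed.

Section States.
Variable C : numClosedFieldType.

Lemma sumr_neq0_witness (I : finType) (F : I -> C) :
  \sum_i F i != 0 -> exists i, F i != 0.
Proof.
have [/existsP//|] := boolP [exists i, F i != 0].
by rewrite negb_exists => /forallP F0; rewrite big1 ?eqxx // => i _; apply/eqP/negPn.
Qed.

Lemma definite_parityP N (par : 'I_N -> bool) (X : 'M[C]_N) :
  definite_parity par X <-> forall i j, X i j != 0 -> par i = par j.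
Proof.
split=> [[X0 [X1 [-> X01]]] i j|Xpar].
  rewrite mxE; have [X0ij|/(X01 false)[-> ->] //] := eqVneq (X0 i j) 0.
  by rewrite X0ij add0r => /(X01 true)[-> ->].
exists (\matrix_(i, j) if par i then 0 else X i j),
       (\matrix_(i, j) if par i then X i j else 0); split.
  by apply/matrixP => i j; rewrite !mxE; case: (par i); rewrite ?addr0 ?add0r.
move=> [] i j; rewrite mxE; case: ifP => pi; rewrite ?eqxx // => Xij;
  by rewrite -(Xpar _ _ Xij) pi.
Qed.

Lemma homogeneous_mx_tr N (par : 'I_N -> bool) (U : 'M[C]_N) f :
  homogeneous_mx par U f -> homogeneous_mx par U^T f.
Proof. by move=> Upar i j; rewrite mxE => /Upar ->; rewrite -addbA addbb addbF. Qed.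

Lemma uchan_definite_parity N (par : 'I_N -> bool) (U sigma : 'M[C]_N) f :
  homogeneous_mx par U f -> definite_parity par sigma ->
  definite_parity par (uchan U sigma).
Proof.
move=> Upar /definite_parityP sigma_par; apply/definite_parityP => i j.
rewrite mxE => /sumr_neq0_witness[k]; rewrite mulf_eq0 negb_or => /andP[+ Ujk].
rewrite mxE => /sumr_neq0_witness[l]; rewrite mulf_eq0 negb_or => /andP[Uil sigma_lk].
move: Ujk; rewrite !mxE conjC_eq0 => /Upar; rewrite (Upar _ _ Uil) (sigma_par _ _ sigma_lk).
by move=> ->.
Qed.

Lemma unpairK m n (i : 'I_m) (j : 'I_n) : unpair (mxvec_index i j) = (i, j).
Proof. by rewrite /unpair /mxvec_index cast_ordK enum_rankK. Qed.

Lemma kronE m n (A : 'M[C]_m) (B : 'M[C]_n) k l :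
  kron A B k l = A (unpair k).1 (unpair l).1 * B (unpair k).2 (unpair l).2.
Proof. by rewrite mxE. Qed.

Lemma ptrace2_pure m n (v : 'cV[C]_(m * n)) :
  ptrace2 (v *m v^t*) = vec_mx v^T *m (vec_mx v^T)^t*.
Proof.
apply/matrixP => i i'; rewrite !mxE; apply: eq_bigr => j _.
by rewrite !mxE big_ord1 !mxE.
Qed.

Lemma vec_mx_kron1_mul m n (U : 'M[C]_n) (v : 'cV[C]_(m * n)) :
  vec_mx (kron 1%:M U *m v)^T = vec_mx v^T *m U^T.
Proof.
pose F i j i' j' :=
  kron 1%:M U (mxvec_index i j) (mxvec_index i' j') * v (mxvec_index i' j') 0.
apply/matrixP => i j; rewrite !mxE (reindex _ (curry_mxvec_bij m n)) /=.
rewrite (eq_bigr (fun p => F i j p.1 p.2)) => [|[] //].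
rewrite -(pair_big xpredT xpredT (F i j)) /= {}/F.
rewrite (bigD1 i) //= [X in _ + X]big1 ?addr0; last first.
  move=> i' /negbTE i'i; apply: big1 => j' _.
  by rewrite kronE !unpairK mxE eq_sym i'i !mul0r.
by apply: eq_big => // j' _; rewrite kronE !unpairK !mxE eqxx mul1r mulrC.
Qed.

Lemma unit_vector_definite_parity N (par : 'I_N -> bool) (v : 'cV[C]_N) :
  v^t* *m v = 1%:M -> definite_parity par (v *m v^t*) ->
  exists p, forall k, v k 0 != 0 -> par k = p.
Proof.
move=> v_unit /definite_parityP vpar.
have [/existsP[k0 vk0]|] := boolP [exists k, v k 0 != 0].
  exists (par k0) => k vk; apply: vpar.
  by rewrite !mxE big_ord1 !mxE mulf_neq0 // conjC_eq0.
rewrite negb_exists => /forallP v0; suff v_eq0 : v = 0.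
  move: v_unit; rewrite v_eq0 mulmx0 => /matrixP/(_ 0 0)/eqP.
  by rewrite !mxE eqxx eq_sym oner_eq0.
by apply/matrixP => k t; rewrite ord1 mxE; apply/eqP/negPn.
Qed.

Lemma vec_mx_total_parity L M (v : 'cV[C]_(2 ^ L * 2 ^ M)) :
  v^t* *m v = 1%:M -> definite_parity (@cparity L M) (v *m v^t*) ->
  exists p, total_parity (vec_mx v^T) p.
Proof.
move=> /unit_vector_definite_parity/[apply] -[p vpar].
by exists p => i j; rewrite !mxE => /vpar; rewrite /cparity unpairK.
Qed.

End States.

Theorem lemma2 (C : numClosedFieldType) (L M : nat)
    (rho : 'M[C]_(2 ^ L)) (Psi Phi : 'M[C]_(2 ^ L * 2 ^ M)) :
  is_state rho ->
  is_pure_state Psi -> is_pure_state Phi ->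
  ptrace2 Psi = rho -> ptrace2 Phi = rho ->
  definite_parity (@cparity L M) Psi -> definite_parity (@cparity L M) Phi ->
  exists U : 'M[C]_(2 ^ M),
    U \is unitarymx /\
    (forall sigma : 'M[C]_(2 ^ M), is_state sigma ->
       definite_parity (@qparity M) sigma ->
       definite_parity (@qparity M) (uchan U sigma)) /\
    uchan (kron 1%:M U) Psi = Phi.
Proof.
move=> _ [psi [psi_unit ->]] [phi [phi_unit ->]] trPsi trPhi dPsi dPhi.
have AB : vec_mx psi^T *m (vec_mx psi^T)^t* = vec_mx phi^T *m (vec_mx phi^T)^t*.
  by rewrite -!ptrace2_pure trPsi trPhi.
have [p pA] := vec_mx_total_parity psi_unit dPsi.
have [p' pB] := vec_mx_total_parity phi_unit dPhi.
have [W [f [Wu AW Wf]]] := gram_eq_homogeneous_unitary AB pA pB.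
have Kpsi : kron 1%:M W^T *m psi = phi.
  by apply: trmx_inj; apply: (can_inj vec_mxK); rewrite vec_mx_kron1_mul trmxK AW.
exists W^T; split; first by rewrite trmx_unitary.
split=> [sigma _|]; first exact: uchan_definite_parity (homogeneous_mx_tr Wf).
by rewrite /uchan mulmxA Kpsi -mulmxA -trmxC_mul Kpsi.
Qed.
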